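(* Let $A$ be a synaptic algebra and let $p,q\in P$ be projections in generic position, i.e. $p\wedge q=p\wedge q^{\perp}=p^{\perp}\wedge q=p^{\perp}\wedge q^{\perp}=0$. Let $c:=(pqp+p^{\perp}q^{\perp}p^{\perp})^{1/2}$ and $s:=(pq^{\perp}p+p^{\perp}qp^{\perp})^{1/2}$, let $u$ be the symmetry of the polar decomposition of $p-q^{\perp}$ and $v$ the symmetry of the polar decomposition of $p-q$, and put $j:=uvp+pvu$. Then \[ q=c^{2}p+csj+s^{2}p^{\perp}, \] where $pqp=c^{2}p=pc^{2}$, $p^{\perp}qp^{\perp}=s^{2}p^{\perp}=p^{\perp}s^{2}$, $pqp^{\perp}+p^{\perp}qp=csj$, $c^{\circ}=s^{\circ}=1$, $j$ is a symmetry exchanging $p$ and $p^{\perp}$ (i.e. $jpj=p^{\perp}$), $cCs$, $cCj$, $sCj$, and $j\in CC(pqp^{\perp}+p^{\perp}qp)$.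
   Context: Synaptic algebra (Foulis): $R$ is a real linear associative algebra with unit $1$, and $A\subseteq R$ is a real linear subspace with $1\in A$. For $a,b\in A$ write $aCb$ iff $ab=ba$; $C(a):=\{b\in A: aCb\}$; $CC(a):=\{b\in A: bCd \text{ for all } d\in C(a)\}$. $A$ is a synaptic algebra with enveloping algebra $R$ iff: (SA1) $A$ is a partially ordered archimedean real linear space with positive cone $A^+$, $1$ is an order unit, and $\|\cdot\|$ is the corresponding order-unit norm; (SA2) $a\in A\Rightarrow a^2\in A^+$; (SA3) $a,b\in A^+\Rightarrow aba\in A^+$; (SA4) if $a\in A$, $b\in A^+$ and $aba=0$ then $ab=ba=0$; (SA5) if $a\in A^+$ there is $b\in A^+\cap CC(a)$ with $b^2=a$; (SA6) for $a\in A$ there is $p\in A$ with $p=p^2$ and, for all $b\in A$, $ab=0\Leftrightarrow pb=0$; (SA7) if $1\le a\in A$ there is $b\in A$ with $ab=ba=1$; (SA8) if $a,b\in A$, $a_1\le a_2\le\cdots$ are pairwise commuting elements of $C(b)$ and $\|a-a_n\|\to0$, then $a\in C(b)$. $A$ is nondegenerate ($1\ne0$). Products are computed in $R$. $P:=\{p\in A:p=p^2\}$ is the orthomodular lattice of projections (order inherited from $A$) with $p^{\perp}:=1-p$, meet $\wedge$, join $\vee$. For $0\le a$, $a^{1/2}$ is the unique positive square root in $A$, $|a|:=(a^2)^{1/2}$. The carrier $a^{\circ}$ of $a$ is the unique projection with $ab=0\Leftrightarrow a^{\circ}b=0$ for all $b\in A$. A symmetry is $u\in A$ with $u^2=1$.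 For $a\in A$, the signum $t$ of $a$ is the partial symmetry with $t^2=a^{\circ}$, $t\in CC(a)$, $a=|a|t=t|a|$; the symmetry of the polar decomposition of $a$ is $t+(a^{\circ})^{\perp}$. *)

From HB Require Import structures.
From mathcomp Require Import all_boot all_order all_algebra.
From mathcomp Require Import boolp classical_sets reals.
From Stdlib Require Import ClassicalEpsilon.
Set Implicit Arguments. Unset Strict Implicit. Unset Printing Implicit Defensive.
Import Order.TTheory GRing.Theory Num.Theory.
Local Open Scope ring_scope.

Definition ou_norm (R : realType) (E : algType R) (pos : E -> Prop) (x : E) : R :=
  inf [set l : R | 0 < l /\ pos (x - (- (l *: 1))) /\ pos (l *: 1 - x)].

(* A synaptic algebra A (given as a subset of its enveloping algebra E,
   a real unital associative algebra), with positive cone [sa_pos];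
   a <= b  iff  b - a is in the positive cone. *)
Record SynapticAlgebra (R : realType) (E : algType R) : Type := {
  sa_A : E -> Prop;
  sa_pos : E -> Prop;
  sa_A0 : sa_A 0;
  sa_A1 : sa_A 1;
  sa_AD : forall a b, sa_A a -> sa_A b -> sa_A (a + b);
  sa_AZ : forall (l : R) a, sa_A a -> sa_A (l *: a);
  sa_posA : forall a, sa_pos a -> sa_A a;
  sa_posD : forall a b, sa_pos a -> sa_pos b -> sa_pos (a + b);
  sa_posZ : forall (l : R) a, 0 <= l -> sa_pos a -> sa_pos (l *: a);
  sa_pos_antisym : forall a, sa_pos a -> sa_pos (- a) -> a = 0;
  sa_archimedean : forall a b, sa_A a -> sa_A b ->
      (forall n : nat, sa_pos (b - a *+ n)) -> sa_pos (- a);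
  sa_order_unit : forall a, sa_A a -> exists n : nat,
      sa_pos (a - (- (1 *+ n))) /\ sa_pos (1 *+ n - a);
  sa_SA2 : forall a, sa_A a -> sa_pos (a * a);
  sa_SA3 : forall a b, sa_pos a -> sa_pos b -> sa_pos (a * b * a);
  sa_SA4 : forall a b, sa_A a -> sa_pos b -> a * b * a = 0 ->
      a * b = 0 /\ b * a = 0;
  sa_SA5 : forall a, sa_pos a -> exists b, sa_pos b /\
      (forall d, sa_A d -> a * d = d * a -> b * d = d * b) /\ b * b = a;
  sa_SA6 : forall a, sa_A a -> exists p, sa_A p /\ p * p = p /\
      (forall b, sa_A b -> (a * b = 0 <-> p * b = 0));
  sa_SA7 : forall a, sa_A a -> sa_pos (a - 1) ->
      exists b, sa_A b /\ a * b = 1 /\ b * a = 1;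
  sa_SA8 : forall a b (an : nat -> E), sa_A a -> sa_A b ->
      (forall n, sa_A (an n)) ->
      (forall n, sa_pos (an n.+1 - an n)) ->
      (forall m n, an m * an n = an n * an m) ->
      (forall n, an n * b = b * an n) ->
      (forall eps : R, 0 < eps -> exists N, forall n, (N <= n)%N ->
          ou_norm sa_pos (a - an n) < eps) ->
      a * b = b * a;
  sa_nondeg : (1 : E) <> 0
}.

Section SynapticDefs.
Variables (R : realType) (E : algType R) (S : SynapticAlgebra E).

Definition inA (a : E) : Prop := sa_A S a.
Definition sle (a b : E) : Prop := sa_pos S (b - a).
Definition commutes (a b : E) : Prop := a * b = b * a.
Definition inC (a b : E) : Prop := inA b /\ commutes a b.
Definition inCC (a b : E) : Prop := inA b /\ forall d, inC a d -> commutes b d.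
Definition is_proj (p : E) : Prop := inA p /\ p * p = p.
Definition is_symmetry (u : E) : Prop := inA u /\ u * u = 1.
Definition perp (p : E) : E := 1 - p.
Definition is_meet (p q m : E) : Prop :=
  is_proj m /\ sle m p /\ sle m q /\
  forall r, is_proj r -> sle r p -> sle r q -> sle r m.

Definition ssqrt (a : E) : E :=
  epsilon (inhabits 0) (fun b => sa_pos S b /\ b * b = a).
Definition sabs (a : E) : E := ssqrt (a * a).
Definition carrier (a : E) : E :=
  epsilon (inhabits 0)
    (fun p => is_proj p /\ forall b, inA b -> (a * b = 0 <-> p * b = 0)).
Definition signum (a : E) : E :=
  epsilon (inhabits 0)
    (fun t => inA t /\ t * t = carrier a /\ inCC a t /\
              a = sabs a * t /\ a = t * sabs a).
Definition polar_sym (a : E) : E := signum a + perp (carrier a).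
End SynapticDefs.

From HB Require Import structures.
From mathcomp Require Import all_boot all_order all_algebra.
From mathcomp Require Import boolp classical_sets reals.
From Stdlib Require Import ClassicalEpsilon.
Set Implicit Arguments. Unset Strict Implicit. Unset Printing Implicit Defensive.
Import GRing.Theory Num.Theory.
Local Open Scope ring_scope.

(* With e := p - q^⊥ and d := p - q one has e^2 = pqp + p^⊥q^⊥p^⊥ = c^2,
   d^2 = pq^⊥p + p^⊥qp^⊥ = s^2, e^2 + d^2 = 1, de = -ed and 2p = 1 + e + d.
   Generic position makes left multiplication by e and by d injective on A, so
   their carriers are 1 and the polar decompositions e = cu = uc, d = sv = vs
   involve genuine symmetries u, v.  The elements c, s, u, v commute pairwise
   except that de = -ed forces uv = -vu; hence j = su - cv and every claim
   becomes an identity between c, s, u, v.  Finally, an x commuting with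
   pqp^⊥ + p^⊥qp = csj commutes with (csj)^2 = (cs)^2, hence with its positive
   square root cs, and injectivity of cs turns cs(jxj - x) = 0 into jxj = x. *)

Inductive zmod_expr := ZAtom of nat | ZAdd of zmod_expr & zmod_expr
  | ZOpp of zmod_expr | ZZero.

Fixpoint zmod_eval (V : zmodType) (env : seq V) (t : zmod_expr) : V :=
  match t with
  | ZAtom i => nth 0 env i
  | ZAdd a b => zmod_eval env a + zmod_eval env b
  | ZOpp a => - zmod_eval env a
  | ZZero => 0
  end.

Fixpoint zmod_coef (t : zmod_expr) (i : nat) : int :=
  match t with
  | ZAtom j => (i == j)%:Z
  | ZAdd a b => zmod_coef a i + zmod_coef b i
  | ZOpp a => - zmod_coef a i
  | ZZero => 0
  end.

Fixpoint zmod_size (t : zmod_expr) : nat :=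
  match t with
  | ZAtom j => j.+1
  | ZAdd a b => maxn (zmod_size a) (zmod_size b)
  | ZOpp a => zmod_size a
  | ZZero => 0
  end.

Lemma zmod_eval_sum (V : zmodType) (env : seq V) t n : (zmod_size t <= n)%N ->
  zmod_eval env t = \sum_(i < n) nth 0 env i *~ zmod_coef t i.
Proof.
elim: t => [j|a iha b ihb|a iha|] /=.
- move=> ltjn; rewrite (bigD1 (Ordinal ltjn)) //= eqxx mulr1z big1 ?addr0 //.
  by move=> i /negbTE; rewrite -val_eqE /= => ->.
- rewrite geq_max => /andP[ha hb]; rewrite iha // ihb // -big_split /=.
  by apply: eq_bigr => i _; rewrite mulrzDr.
- by move=> h; rewrite iha // -sumrN; apply: eq_bigr => i _; rewrite mulrNz.
- by move=> _; rewrite big1 // => i _; rewrite mulr0z.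
Qed.

Lemma zmod_eval_eq (V : zmodType) (env : seq V) t1 t2 :
  all (fun i => zmod_coef t1 i == zmod_coef t2 i)
      (iota 0 (maxn (zmod_size t1) (zmod_size t2))) ->
  zmod_eval env t1 = zmod_eval env t2.
Proof.
move=> /allP; set n := maxn _ _ => eq_coef.
rewrite (@zmod_eval_sum _ _ t1 n) ?leq_maxl // (@zmod_eval_sum _ _ t2 n) ?leq_maxr //.
apply: eq_bigr => i _; congr (_ *~ _); apply/eqP/eq_coef.
by rewrite mem_iota ltn_ord.
Qed.

(* [abel] decides equalities in a Z-module by comparing integer coefficients;
   every maximal subterm not built from [+], [-] and [0] is an atom, and atoms
   are identified only up to syntactic equality. *)
Ltac zmod_index x l :=
  lazymatch l with
  | ?y :: ?l' => match constr:(tt) with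
                 | _ => let _ := constr:(@erefl _ x : x = y) in constr:(0%N)
                 | _ => let n := zmod_index x l' in constr:(S n)
                 end
  end.
Ltac zmod_atoms t l :=
  lazymatch t with
  | @GRing.add _ ?a ?b => let l1 := zmod_atoms a l in zmod_atoms b l1
  | @GRing.opp _ ?a => zmod_atoms a l
  | @GRing.zero _ => l
  | _ => match constr:(tt) with
         | _ => let n := zmod_index t l in l
         | _ => constr:(t :: l)
         end
  end.
Ltac zmod_reify t l :=
  lazymatch t with
  | @GRing.add _ ?a ?b =>
      let x := zmod_reify a l in let y := zmod_reify b l in constr:(ZAdd x y)
  | @GRing.opp _ ?a => let x := zmod_reify a l in constr:(ZOpp x)
  | @GRing.zero _ => constr:(ZZero)
  | _ => let n := zmod_index t l in constr:(ZAtom n)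
  end.
Ltac abel :=
  lazymatch goal with |- @eq ?T ?L ?R =>
    let l := zmod_atoms R ltac:(zmod_atoms L (@nil T)) in
    let tl := zmod_reify L l in let tr := zmod_reify R l in
    change (zmod_eval l tl = zmod_eval l tr); apply: zmod_eval_eq;
    vm_compute; reflexivity
  end.

Ltac ring_expand :=
  rewrite ?(mulrDl, mulrDr, mulrBl, mulrBr, mul1r, mulr1, mulNr, mulrN, opprK,
            mulrA, mul0r, mulr0).

Section TwoIdempotents.
Variables (R : pzRingType) (p q : R).
Hypotheses (pp : p * p = p) (qq : q * q = q).

Let mulr_pp x : x * p * p = x * p. Proof. by rewrite -mulrA pp. Qed.
Let mulr_qq x : x * q * q = x * q. Proof. by rewrite -mulrA qq. Qed.

Local Notation e := (p - (1 - q)).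
Local Notation d := (p - q).

Ltac idem_normalize :=
  ring_expand; rewrite ?(pp, qq, mulr_pp, mulr_qq); abel.

Lemma sqr_sub_perp : p * q * p + (1 - p) * (1 - q) * (1 - p) = e * e.
Proof. by idem_normalize. Qed.

Lemma sqr_sub_idem : p * (1 - q) * p + (1 - p) * q * (1 - p) = d * d.
Proof. by idem_normalize. Qed.

Lemma sqr_sub_perp_add_sqr : e * e + d * d = 1.
Proof. by idem_normalize. Qed.

Lemma sub_idem_anticomm : d * e = - (e * d).
Proof. by idem_normalize. Qed.

Lemma sqr_sub_perp_comm : e * e * d = d * (e * e).
Proof. by idem_normalize. Qed.

Lemma sqr_sub_idem_comm : d * d * e = e * (d * d).
Proof. by idem_normalize. Qed.

Lemma sqr_sub_perp_comml : e * e * p = p * (e * e).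
Proof. by idem_normalize. Qed.

Lemma sqr_sub_idem_commr : d * d * (1 - p) = (1 - p) * (d * d).
Proof. by idem_normalize. Qed.

Lemma compress_idem : p * q * p = e * e * p.
Proof. by idem_normalize. Qed.

Lemma compress_perp : (1 - p) * q * (1 - p) = d * d * (1 - p).
Proof. by idem_normalize. Qed.

Lemma offdiag_idem : p * q * (1 - p) + (1 - p) * q * p = d * d * e - e * e * d.
Proof. by idem_normalize. Qed.

Lemma idem_decomp : q = e * e * p + (d * d * e - e * e * d) + d * d * (1 - p).
Proof. by idem_normalize. Qed.

Lemma idem_mul2 : p *+ 2 = 1 + (e + d).
Proof. by rewrite mulr2n; abel. Qed.

Lemma perp_mul2 : (1 - p) *+ 2 = 1 - (e + d).
Proof. by rewrite mulr2n; abel. Qed.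

End TwoIdempotents.

Section AnticommutingSymmetries.
Variables (R : pzRingType) (c s u v : R).
Hypotheses (sc : s * c = c * s) (uc : u * c = c * u) (vc : v * c = c * v)
           (us : u * s = s * u) (vs : v * s = s * v)
           (uu : u * u = 1) (vv : v * v = 1) (vu : v * u = - (u * v)).

Let mulr_swap (a b x : R) : a * b = b * a -> x * a * b = x * b * a.
Proof. by move=> ab; rewrite -mulrA ab mulrA. Qed.
Let mulr_symK (a x : R) : a * a = 1 -> x * a * a = x.
Proof. by move=> aa; rewrite -mulrA aa mulr1. Qed.
Let mulr_anti (a b x : R) : a * b = - (b * a) -> x * a * b = - (x * b * a).
Proof. by move=> ab; rewrite -mulrA ab mulrN mulrA. Qed.

Ltac sym_normalize :=
  ring_expand;
  rewrite ?(sc, uc, vc, us, vs, uu, vv, vu, mulr_swap _ sc, mulr_swap _ uc,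
            mulr_swap _ vc, mulr_swap _ us, mulr_swap _ vs, mulr_symK _ uu,
            mulr_symK _ vv, mulr_anti _ vu, mulrN, mulNr, opprK);
  abel.

Local Notation j := (s * u - c * v).

Lemma sym_pair_jordan :
  u * v * (1 + (c * u + s * v)) + (1 + (c * u + s * v)) * v * u = j *+ 2.
Proof. by rewrite mulr2n; sym_normalize. Qed.

Lemma sym_pair_sqr : c * c + s * s = 1 -> j * j = 1.
Proof. by move=> <-; sym_normalize. Qed.

Lemma sym_pair_commc : c * j = j * c.
Proof. by sym_normalize. Qed.

Lemma sym_pair_comms : s * j = j * s.
Proof. by sym_normalize. Qed.

Lemma sym_pair_anticomm : j * (c * u + s * v) = - ((c * u + s * v) * j).
Proof. by sym_normalize. Qed.

Lemma sym_pair_offdiag :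
  c * s * j = s * v * (s * v) * (c * u) - c * u * (c * u) * (s * v).
Proof. by sym_normalize. Qed.

End AnticommutingSymmetries.

Lemma conj_sym_anticomm (R : pzRingType) (j x : R) :
  j * j = 1 -> j * x = - (x * j) -> j * (1 + x) * j = 1 - x.
Proof.
by move=> jj jx; rewrite mulrDr mulr1 mulrDl jj jx mulNr -mulrA jj mulr1.
Qed.

Lemma mulrn2_inj (K : numFieldType) (V : lmodType K) (x y : V) :
  x *+ 2 = y *+ 2 -> x = y.
Proof.
have two_unit : (2%:R : K) != 0 by rewrite pnatr_eq0.
by move=> /(congr1 ( *:%R (2%:R : K)^-1)); rewrite -!scaler_nat !scalerA mulVf // !scale1r.
Qed.

Section Synaptic.
Variables (R : realType) (E : algType R) (S : SynapticAlgebra E).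
Local Notation A := (sa_A S).
Local Notation pos := (sa_pos S).

Lemma sa_AN a : A a -> A (- a).
Proof. by move=> Aa; rewrite -scaleN1r; apply: sa_AZ. Qed.

Lemma sa_AB a b : A a -> A b -> A (a - b).
Proof. by move=> Aa Ab; apply/sa_AD/sa_AN. Qed.

Lemma sa_A_sqr a : A a -> A (a * a).
Proof. by move=> Aa; apply/sa_posA/sa_SA2. Qed.

Lemma sa_pos1 : pos 1.
Proof. by rewrite -[1]mulr1; apply/sa_SA2/sa_A1. Qed.

Lemma sa_pos_idem r : A r -> r * r = r -> pos r.
Proof. by move=> Ar rr; rewrite -rr; apply: sa_SA2. Qed.

Lemma sa_A_half x : A (x *+ 2) -> A x.
Proof.
move=> A2x; have -> : x = (2%:R : R)^-1 *: (x *+ 2).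
  by rewrite -scaler_nat scalerA mulVf ?scale1r // pnatr_eq0.
exact: sa_AZ.
Qed.

Lemma sa_A_jordan a b : A a -> A b -> A (a * b + b * a).
Proof.
move=> Aa Ab; have -> : a * b + b * a = (a + b) * (a + b) - a * a - b * b.
  by ring_expand; abel.
by do 2?apply: sa_AB; apply: sa_A_sqr => //; apply: sa_AD.
Qed.

Lemma sa_A_mulC a b : A a -> A b -> a * b = b * a -> A (a * b).
Proof. by move=> Aa Ab ab; apply: sa_A_half; rewrite mulr2n {2}ab; apply: sa_A_jordan. Qed.

Lemma sa_A_triple a b : A a -> A b -> A (a * b * a).
Proof.
move=> Aa Ab; apply: sa_A_half.
have -> : (a * b * a) *+ 2 =
    (a * b + b * a) * a + a * (a * b + b * a) - (a * a * b + b * (a * a)).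
  by rewrite mulr2n; ring_expand; abel.
by apply: sa_AB; apply: sa_A_jordan => //; [apply: sa_A_jordan | apply: sa_A_sqr].
Qed.

Lemma sa_sqr_eq0 y : A y -> y * y = 0 -> y = 0.
Proof.
move=> Ay yy; have [y0 _] : y * 1 = 0 /\ 1 * y = 0.
  by apply: sa_SA4 Ay sa_pos1 _; rewrite mulr1.
by rewrite -y0 mulr1.
Qed.

Lemma sa_pos_mulC a b : pos a -> pos b -> a * b = b * a -> pos (a * b).
Proof.
move=> pa pb ab; have [r [pr [rC rr]]] := sa_SA5 pa.
have rb : r * b = b * r := rC b (sa_posA pb) ab.
by rewrite -rr -mulrA rb mulrA; apply: sa_SA3.
Qed.

(* The difference z of two square roots satisfies z (b1 + b2) = 0, so z^2 b1 and
   z^2 b2 are positive with sum 0; hence z^3 = 0 and z = 0. *)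
Lemma sa_pos_sqrt_unique a b1 b2 : pos b1 -> pos b2 -> b1 * b1 = a -> b2 * b2 = a ->
  (forall d, A d -> a * d = d * a -> b1 * d = d * b1) -> b1 = b2.
Proof.
move=> pb1 pb2 b11 b22 b1C.
have Ab1 := sa_posA pb1; have Ab2 := sa_posA pb2.
have b12 : b1 * b2 = b2 * b1 by apply: b1C => //; rewrite -b22 mulrA.
pose z := b1 - b2; have Az : A z := sa_AB Ab1 Ab2.
have zb1 : z * b1 = b1 * z by rewrite /z mulrBl mulrBr b12.
have zb2 : z * b2 = b2 * z by rewrite /z mulrBl mulrBr b12.
have z_sum : z * (b1 + b2) = 0 by rewrite /z mulrBl !mulrDr b11 b22 b12; abel.
pose w := z * z; have pw : pos w := sa_SA2 Az.
have wb1 : w * b1 = b1 * w by rewrite /w -mulrA zb1 !mulrA zb1.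
have wb2 : w * b2 = b2 * w by rewrite /w -mulrA zb2 !mulrA zb2.
have w_sum : w * b1 + w * b2 = 0 by rewrite -mulrDr /w -mulrA z_sum mulr0.
have wb1_0 : w * b1 = 0.
  apply: sa_pos_antisym (sa_pos_mulC pw pb1 wb1) _.
  have -> : - (w * b1) = w * b2 by apply/eqP; rewrite eq_sym -subr_eq0 opprK addrC w_sum.
  exact: sa_pos_mulC.
have wb2_0 : w * b2 = 0 by move: w_sum; rewrite wb1_0 add0r.
have wz : w * z = 0 by rewrite /z mulrBr wb1_0 wb2_0 subr0.
have w0 : w = 0 by apply: sa_sqr_eq0 (sa_A_sqr Az) _; rewrite mulrA wz mul0r.
by apply/eqP; rewrite -subr_eq0; apply/eqP/sa_sqr_eq0.
Qed.

Lemma ssqrt_spec a : pos a -> pos (ssqrt S a) /\ ssqrt S a * ssqrt S a = a.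
Proof.
move=> pa; apply: (@epsilon_spec E (inhabits 0) (fun b => pos b /\ b * b = a)).
by have [b [pb [_ bb]]] := sa_SA5 pa; exists b.
Qed.

Lemma ssqrt_CC a : pos a -> forall d, A d -> a * d = d * a ->
  ssqrt S a * d = d * ssqrt S a.
Proof.
move=> pa; have [b [pb [bC bb]]] := sa_SA5 pa; have [pr rr] := ssqrt_spec pa.
by rewrite -(sa_pos_sqrt_unique pb pr bb rr bC).
Qed.

Lemma ssqrt_sqr b : pos b -> ssqrt S (b * b) = b.
Proof.
move=> pb; have pbb : pos (b * b) := sa_SA2 (sa_posA pb).
have [r [pr [rC rr]]] := sa_SA5 pbb; have [ps ss] := ssqrt_spec pbb.
by rewrite -(sa_pos_sqrt_unique pr ps rr ss rC) (sa_pos_sqrt_unique pr pb rr (erefl _) rC).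
Qed.

Lemma commute_of_sqr_pos b x : pos b -> A x -> b * b * x = x * (b * b) ->
  b * x = x * b.
Proof.
by move=> pb Ax bbx; rewrite -(ssqrt_sqr pb); apply: ssqrt_CC => //; apply/sa_SA2/sa_posA.
Qed.

Definition ann_trivial (a : E) := forall x, A x -> a * x = 0 -> x = 0.

Lemma ann_trivial_mulr a b : ann_trivial (a * b) -> ann_trivial b.
Proof. by move=> ab x Ax bx; apply: ab Ax _; rewrite -mulrA bx mulr0. Qed.

Lemma ann_trivial_mul a b : A b -> ann_trivial a -> ann_trivial b -> ann_trivial (a * b).
Proof.
move=> Ab a0 b0 y Ay aby; have pyy : pos (y * y) := sa_SA2 Ay.
have byyb : b * (y * y) * b = 0.
  apply: a0; first exact: sa_A_triple Ab (sa_posA pyy).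
  by rewrite !mulrA aby !mul0r.
have [byy _] := sa_SA4 Ab pyy byyb.
exact: sa_sqr_eq0 Ay (b0 _ (sa_posA pyy) byy).
Qed.

Lemma ann_trivial_sqr a : A a -> ann_trivial a -> ann_trivial (a * a).
Proof.
move=> Aa a0 x Ax aax; have pxx : pos (x * x) := sa_SA2 Ax.
have axxa : a * (x * x) * a = 0.
  apply: sa_sqr_eq0; first exact: sa_A_triple Aa (sa_posA pxx).
  have -> : a * (x * x) * a * (a * (x * x) * a) = a * (x * x) * (a * a * x) * x * a.
    by rewrite !mulrA.
  by rewrite aax mulr0 !mul0r.
have [axx _] := sa_SA4 Aa pxx axxa.
exact: sa_sqr_eq0 Ax (a0 _ (sa_posA pxx) axx).
Qed.

Lemma carrier_spec a : A a ->
  is_proj S (carrier S a) /\ forall b, A b -> (a * b = 0 <-> carrier S a * b = 0).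
Proof.
move=> Aa; apply: (@epsilon_spec E (inhabits 0)
  (fun r => is_proj S r /\ forall b, inA S b -> (a * b = 0 <-> r * b = 0))).
by have [r [Ar [rr ar]]] := sa_SA6 Aa; exists r.
Qed.

Lemma mulr_carrier a : A a -> a * carrier S a = a.
Proof.
move=> Aa; have [[Ar rr] ar] := carrier_spec Aa.
have : a * (1 - carrier S a) = 0.
  by apply/(ar _ (sa_AB (sa_A1 S) Ar)); rewrite mulrBr mulr1 rr subrr.
by rewrite mulrBr mulr1 => /subr0_eq.
Qed.

Lemma carrier_eq1 a : A a -> ann_trivial a -> carrier S a = 1.
Proof.
move=> Aa a0; have [[Ar _] _] := carrier_spec Aa.
apply/esym/subr0_eq/a0; first exact: sa_AB (sa_A1 S) Ar.
by rewrite mulrBr mulr1 mulr_carrier // subrr.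
Qed.

Lemma carrier_CC a x : A a -> A x -> a * x = x * a -> carrier S a * x = x * carrier S a.
Proof.
move=> Aa Ax ax; have [[Ar rr] ar] := carrier_spec Aa.
set r := carrier S a in Ar rr ar *.
have Ar' : A (1 - r) := sa_AB (sa_A1 S) Ar.
have a_r' : a * (1 - r) = 0 by rewrite mulrBr mulr1 mulr_carrier // subrr.
have r_r' : r * (1 - r) = 0 by rewrite mulrBr mulr1 rr subrr.
have rxr' : r * x * (1 - r) = 0.
  have : a * (x * (1 - r) + (1 - r) * x) = 0.
    by rewrite mulrDr !mulrA ax -(mulrA x) a_r' mulr0 mul0r addr0.
  by move/(ar _ (sa_A_jordan Ax Ar')); rewrite mulrDr !mulrA r_r' mul0r addr0.
have r'xr : (1 - r) * x * r = 0.
  pose z := r * x * (1 - r) + (1 - r) * x * r.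
  have Az : A z.
    have -> : z = (r * x + x * r) - (r * x * r) *+ 2.
      by rewrite /z mulr2n; ring_expand; abel.
    apply: sa_AB (sa_A_jordan Ar Ax) _.
    by rewrite mulr2n; apply: sa_AD; apply: sa_A_triple.
  have : z = 0.
    apply: sa_sqr_eq0 Az _; rewrite /z rxr' add0r.
    by rewrite -(mulrA _ x r) -!mulrA (mulrA r) r_r' mul0r !mulr0.
  by rewrite /z rxr' add0r.
move/eqP: rxr'; rewrite mulrBr mulr1 subr_eq0 => /eqP ->.
by move/eqP: r'xr; rewrite !mulrBl mul1r subr_eq0 => /eqP ->.
Qed.

Lemma perpK (p : E) : perp (perp p) = p.
Proof. exact: subKr. Qed.

Lemma perp_proj p : is_proj S p -> is_proj S (perp p).
Proof.
move=> [Ap pp]; split; first exact: sa_AB (sa_A1 S) Ap.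
by rewrite /perp mulrBl mul1r mulrBr mulr1 pp subrr subr0.
Qed.

Lemma proj_le r p : is_proj S r -> is_proj S p -> r * p = r -> sle S r p.
Proof.
move=> [Ar rr] [Ap pp] rp; have Ap' := (perp_proj (conj Ap pp)).1.
have pr : p * r = r.
  have [_ p'r] : r * perp p = 0 /\ perp p * r = 0.
    apply: sa_SA4 Ar (sa_pos_idem Ap' (perp_proj (conj Ap pp)).2) _.
    by rewrite /perp mulrBr mulr1 rp subrr mul0r.
  by apply/esym/subr0_eq; rewrite -[X in X - _]mul1r -mulrBl.
apply: sa_pos_idem; first exact: sa_AB Ap Ar.
by ring_expand; rewrite pp pr rp rr; abel.
Qed.

Lemma carrier_mul_proj a p : A a -> A p -> a * p = a -> carrier S a * p = carrier S a.
Proof.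
move=> Aa Ap ap; have [_ ar] := carrier_spec Aa.
apply/esym/subr0_eq; rewrite -[X in X - _]mulr1 -mulrBr.
by apply/ar; [exact: sa_AB (sa_A1 S) Ap | rewrite mulrBr mulr1 ap subrr].
Qed.

(* [r] := carrier of [p k p] lies under [p] and under [t], hence is [0]. *)
Lemma meet0_mul_proj p t k : is_proj S p -> is_proj S t -> is_proj S k ->
  is_meet S p t 0 -> p * k = t * k -> k * p = k * t -> p * k = 0.
Proof.
move=> [Ap pp] [At tt] [Ak kk] [_ [_ [_ meet_max]]] pkt kpt.
have Ay : A (p * k * p) := sa_A_triple Ap Ak.
have [[Ar rr] yr] := carrier_spec Ay; set r := carrier S _ in Ar rr yr.
have rp : r * p = r by apply: carrier_mul_proj Ay Ap _; rewrite -mulrA pp.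
have rt : r * t = r.
  by apply: carrier_mul_proj Ay At _; rewrite -(mulrA p k p) kpt !mulrA -(mulrA _ t t) tt.
have r0 : r = 0.
  have := meet_max r (conj Ar rr) (proj_le (conj Ar rr) (conj Ap pp) rp)
                                  (proj_le (conj Ar rr) (conj At tt) rt).
  by rewrite /sle sub0r; apply: sa_pos_antisym; apply: sa_pos_idem.
have /(yr _ (sa_A1 S)) : r * 1 = 0 by rewrite r0 mul0r.
rewrite mulr1 => pkp0.
by have [] := sa_SA4 Ap (sa_pos_idem Ak kk) pkp0.
Qed.

(* The carrier [r] of [p - t] satisfies [(p - t) (1 - r) = 0]; applying the
   previous lemma to [k := 1 - r] for [p, t] and for their complements gives
   [p k = perp p * k = 0], so [k = 0]. *)
Lemma sub_proj_ann_trivial p t : is_proj S p -> is_proj S t ->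
  is_meet S p t 0 -> is_meet S (perp p) (perp t) 0 -> ann_trivial (p - t).
Proof.
move=> hp ht meet_pt meet_pt'; have Ad : A (p - t) := sa_AB hp.1 ht.1.
have [hr dr] := carrier_spec Ad; set r := carrier S _ in hr dr.
suff r1 : r = 1 by move=> x Ax /(dr _ Ax); rewrite r1 mul1r.
have hk := perp_proj hr; set k := perp r in hk.
have dk : (p - t) * k = 0 by apply/(dr _ hk.1); rewrite /k /perp mulrBr mulr1 hr.2 subrr.
have [_ kd] : (p - t) * k = 0 /\ k * (p - t) = 0.
  by apply: sa_SA4 Ad (sa_pos_idem hk.1 hk.2) _; rewrite dk mul0r.
have pkt : p * k = t * k by apply: subr0_eq; rewrite -mulrBl.
have kpt : k * p = k * t by apply: subr0_eq; rewrite -mulrBr.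
have pk := meet0_mul_proj hp ht hk meet_pt pkt kpt.
have p'k : perp p * k = 0.
  apply: meet0_mul_proj (perp_proj hp) (perp_proj ht) hk meet_pt' _ _.
    by rewrite /perp !mulrBl pkt.
  by rewrite /perp !mulrBr kpt.
by apply/esym/subr0_eq; move: p'k; rewrite /perp mulrBl mul1r pk subr0.
Qed.

Section Polar.
Variable a : E.
Hypotheses (Aa : A a) (a0 : ann_trivial a).

Local Notation c := (ssqrt S (a * a)).
Local Notation P := (carrier S (c + a)).
Local Notation N := (carrier S (c - a)).

Let pos_aa : pos (a * a) := sa_SA2 Aa.
Let Ac : A c := sa_posA (ssqrt_spec pos_aa).1.
Let cc : c * c = a * a := (ssqrt_spec pos_aa).2.
Let ca : c * a = a * c. Proof. by apply: ssqrt_CC; rewrite ?mulrA. Qed.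
Let Acpa : A (c + a) := sa_AD Ac Aa.
Let Acma : A (c - a) := sa_AB Ac Aa.

Lemma pos_neg_carriers :
  [/\ P * N = 0, N * P = 0, P + N = 1, c * P = a * P & c * N = - (a * N)].
Proof.
have [[AP _] hP] := carrier_spec Acpa; have [[AN _] hN] := carrier_spec Acma.
have pm : (c + a) * (c - a) = 0 by ring_expand; rewrite cc ca; abel.
have mp : (c - a) * (c + a) = 0 by ring_expand; rewrite cc ca; abel.
have mP : (c - a) * P = 0.
  by rewrite -(carrier_CC Acpa Acma); [apply/hP | rewrite pm mp].
have pN : (c + a) * N = 0.
  by rewrite -(carrier_CC Acma Acpa); [apply/hN | rewrite pm mp].
have cP : c * P = a * P by apply: subr0_eq; rewrite -mulrBl.
have cN : c * N = - (a * N) by apply/eqP; rewrite -addr_eq0 -mulrDl pN.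
split => //; [exact/hP | exact/hN |].
have Ax : A (1 - P - N) := sa_AB (sa_AB (sa_A1 S) AP) AN.
suff /(a0 Ax)/subr0_eq <- : a * (1 - P - N) = 0 by rewrite addrC subrK.
apply: (@mulrn2_inj R E); rewrite mul0rn.
have -> : (a * (1 - P - N)) *+ 2 = (c + a) * (1 - P - N) - (c - a) * (1 - P - N).
  by rewrite mulr2n; ring_expand; abel.
have e1 : (c + a) * (1 - P - N) = 0.
  by rewrite !mulrBr mulr1 mulr_carrier // pN subrr subr0.
have e2 : (c - a) * (1 - P - N) = 0.
  by rewrite !mulrBr mulr1 mulr_carrier // mP subr0 subrr.
by rewrite e1 e2 subrr.
Qed.

Lemma signum_spec_ann_trivial :
  inA S (P - N) /\ (P - N) * (P - N) = carrier S a /\ inCC S a (P - N) /\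
  a = sabs S a * (P - N) /\ a = (P - N) * sabs S a.
Proof.
have [PN NP PN1 cP cN] := pos_neg_carriers.
have [[AP PP] _] := carrier_spec Acpa; have [[AN NN] _] := carrier_spec Acma.
have ct : c * (P - N) = a by rewrite mulrBr cP cN opprK -mulrDr PN1 mulr1.
have tc : (P - N) * c = c * (P - N).
  by rewrite mulrBl mulrBr !carrier_CC //; ring_expand; rewrite ca.
split; first exact: sa_AB AP AN.
split; first by rewrite (carrier_eq1 Aa a0) -PN1; ring_expand; rewrite PP NN PN NP; abel.
split; last by rewrite /sabs tc ct.
split => [|x [Ax ax]]; first exact: sa_AB AP AN.
have cx : c * x = x * c by apply: ssqrt_CC => //; rewrite -mulrA ax !mulrA ax.
by rewrite /commutes mulrBl mulrBr !carrier_CC //; ring_expand; rewrite cx ax.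
Qed.

End Polar.

Lemma polar_sym_spec a : A a -> ann_trivial a ->
  is_symmetry S (polar_sym S a) /\
  (forall x, A x -> a * x = x * a -> polar_sym S a * x = x * polar_sym S a) /\
  a = ssqrt S (a * a) * polar_sym S a /\ a = polar_sym S a * ssqrt S (a * a).
Proof.
move=> Aa a0; rewrite /polar_sym carrier_eq1 // /perp subrr addr0.
have [] := @epsilon_spec E (inhabits 0) (fun t => inA S t /\ t * t = carrier S a /\
  inCC S a t /\ a = sabs S a * t /\ a = t * sabs S a).
  by eexists; apply: signum_spec_ann_trivial.
rewrite -/(signum S a) carrier_eq1 // => At [tt [[_ tC] [act atc]]].
by split=> //; split=> [x Ax ax|]; [apply: tC | split].
Qed.

(* [x] commutes with [(g t)^2 = g^2], hence with its positive square root [g];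
   then [g (t x t - x) = 0]. *)
Lemma commute_sym_of_commute_mul g t x : pos g -> ann_trivial g ->
  A t -> t * t = 1 -> g * t = t * g -> A x -> g * t * x = x * (g * t) ->
  t * x = x * t.
Proof.
move=> pg g0 At tt gt Ax gtx.
have gtgt : g * t * (g * t) = g * g by rewrite -mulrA (mulrA t) -gt -mulrA tt mulr1.
have gx : g * x = x * g.
  apply: commute_of_sqr_pos pg Ax _.
  by rewrite -gtgt -mulrA gtx !mulrA gtx mulrA.
have txt : t * x * t = x.
  apply/subr0_eq/g0; first exact: sa_AB (sa_A_triple At Ax) Ax.
  by rewrite mulrBr !mulrA gtx -!mulrA tt mulr1 gx subrr.
by rewrite -{1}txt !mulrA tt mul1r.
Qed.

Section GenericPosition.
Variables p q : E.
Hypotheses (hp : is_proj S p) (hq : is_proj S q).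
Hypotheses (meet_pq : is_meet S p q 0) (meet_pq' : is_meet S p (perp q) 0)
           (meet_p'q : is_meet S (perp p) q 0)
           (meet_p'q' : is_meet S (perp p) (perp q) 0).

Local Notation e := (p - perp q).
Local Notation d := (p - q).
Local Notation c := (ssqrt S (p * q * p + perp p * perp q * perp p)).
Local Notation s := (ssqrt S (p * perp q * p + perp p * q * perp p)).
Local Notation u := (polar_sym S e).
Local Notation v := (polar_sym S d).
Local Notation j := (u * v * p + p * v * u).

Let pp : p * p = p := hp.2.
Let qq : q * q = q := hq.2.
Let Ae : A e := sa_AB hp.1 (perp_proj hq).1.
Let Ad : A d := sa_AB hp.1 hq.1.

Let e0 : ann_trivial e.
Proof.
apply: sub_proj_ann_trivial hp (perp_proj hq) meet_pq' _.
by rewrite perpK.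
Qed.

Let d0 : ann_trivial d := sub_proj_ann_trivial hp hq meet_pq meet_p'q'.

Let c_ssqrt : c = ssqrt S (e * e).
Proof. by rewrite /perp sqr_sub_perp. Qed.

Let s_ssqrt : s = ssqrt S (d * d).
Proof. by rewrite /perp sqr_sub_idem. Qed.

Lemma generic_c_spec : pos c /\ c * c = e * e /\ e = c * u /\ e = u * c.
Proof.
rewrite c_ssqrt; have [pc cc] := ssqrt_spec (sa_SA2 Ae).
by have [_ [_ eu]] := polar_sym_spec Ae e0; split; [|split].
Qed.

Lemma generic_s_spec : pos s /\ s * s = d * d /\ d = s * v /\ d = v * s.
Proof.
rewrite s_ssqrt; have [ps ss] := ssqrt_spec (sa_SA2 Ad).
by have [_ [_ dv]] := polar_sym_spec Ad d0; split; [|split].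
Qed.

Let Ac : A c := sa_posA generic_c_spec.1.
Let As : A s := sa_posA generic_s_spec.1.
Let Au : A u := (polar_sym_spec Ae e0).1.1.
Let Av : A v := (polar_sym_spec Ad d0).1.1.

Lemma generic_commute :
  [/\ s * c = c * s, u * c = c * u, v * c = c * v, u * s = s * u & v * s = s * v].
Proof.
have [_ [uC _]] := polar_sym_spec Ae e0; have [_ [vC _]] := polar_sym_spec Ad d0.
have [_ [_ [ecu euc]]] := generic_c_spec; have [_ [_ [dsv dvs]]] := generic_s_spec.
have cC : forall x, A x -> e * e * x = x * (e * e) -> c * x = x * c.
  by rewrite c_ssqrt; apply: ssqrt_CC (sa_SA2 Ae).
have sC : forall x, A x -> d * d * x = x * (d * d) -> s * x = x * s.
  by rewrite s_ssqrt; apply: ssqrt_CC (sa_SA2 Ad).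
have cd : c * d = d * c by apply: cC Ad _; apply: sqr_sub_perp_comm.
have se : s * e = e * s by apply: sC Ae _; apply: sqr_sub_idem_comm.
split; [|by rewrite -euc -ecu|exact: vC Ac (esym cd)|exact: uC As (esym se)|].
  by apply: sC Ac _; rewrite -mulrA -cd mulrA -cd mulrA.
by rewrite -dvs -dsv.
Qed.

Let c0 : ann_trivial c.
Proof.
by apply: (@ann_trivial_mulr c); rewrite generic_c_spec.2.1; apply: ann_trivial_sqr.
Qed.

Let s0 : ann_trivial s.
Proof.
by apply: (@ann_trivial_mulr s); rewrite generic_s_spec.2.1; apply: ann_trivial_sqr.
Qed.

Let cs0 : ann_trivial (c * s) := ann_trivial_mul As c0 s0.

Lemma generic_anticomm : v * u = - (u * v).
Proof.
have [sc uc vc us vs] := generic_commute.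
have [_ [_ [ecu _]]] := generic_c_spec; have [_ [_ [dsv _]]] := generic_s_spec.
apply/eqP; rewrite -addr_eq0; apply/eqP/cs0; first exact: sa_A_jordan.
have de : d * e = c * s * (v * u).
  by rewrite [d in LHS]dsv [e in LHS]ecu !mulrA -(mulrA s) vc mulrA sc.
have ed : e * d = c * s * (u * v).
  by rewrite [d in LHS]dsv [e in LHS]ecu !mulrA -(mulrA c) us mulrA.
have := sub_idem_anticomm pp qq; rewrite -/(perp q) de ed.
by move/eqP; rewrite -addr_eq0 -mulrDr => /eqP.
Qed.

Let sc : s * c = c * s. Proof. by case: generic_commute. Qed.
Let uc : u * c = c * u. Proof. by case: generic_commute. Qed.
Let vc : v * c = c * v. Proof. by case: generic_commute. Qed.
Let us : u * s = s * u. Proof. by case: generic_commute. Qed.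
Let vs : v * s = s * v. Proof. by case: generic_commute. Qed.
Let uu : u * u = 1 := (polar_sym_spec Ae e0).1.2.
Let vv : v * v = 1 := (polar_sym_spec Ad d0).1.2.
Let vu : v * u = - (u * v) := generic_anticomm.

Let e_add_d : e + d = c * u + s * v.
Proof.
have [_ [_ [ecu _]]] := generic_c_spec; have [_ [_ [dsv _]]] := generic_s_spec.
by rewrite -ecu -dsv.
Qed.

Lemma generic_j_eq : j = s * u - c * v.
Proof.
apply: (@mulrn2_inj R E); rewrite mulrnDl -mulrnAr -!mulrnAl.
by rewrite (idem_mul2 p q) -/(perp q) e_add_d; apply: sym_pair_jordan.
Qed.

Lemma generic_j_symmetry : is_symmetry S j /\ j * p * j = perp p.
Proof.
have jj : j * j = 1.
  rewrite generic_j_eq; apply: sym_pair_sqr => //.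
  by rewrite generic_c_spec.2.1 generic_s_spec.2.1; apply: sqr_sub_perp_add_sqr.
split; first split => //.
  rewrite generic_j_eq; apply: sa_AB; apply: sa_A_mulC => //; exact/esym.
apply: (@mulrn2_inj R E); rewrite -mulrnAl -mulrnAr (idem_mul2 p q) (perp_mul2 p q).
rewrite -/(perp q) e_add_d.
by apply: conj_sym_anticomm jj _; rewrite generic_j_eq; apply: sym_pair_anticomm.
Qed.

Lemma generic_csj : c * s * j = d * d * e - e * e * d.
Proof.
have [_ [_ [ecu _]]] := generic_c_spec; have [_ [_ [dsv _]]] := generic_s_spec.
by rewrite generic_j_eq sym_pair_offdiag // -ecu -dsv.
Qed.

Lemma generic_offdiag : p * q * perp p + perp p * q * p = c * s * j.
Proof. by rewrite generic_csj; apply: offdiag_idem. Qed.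

Lemma generic_decomp : q = c ^+ 2 * p + c * s * j + s ^+ 2 * perp p.
Proof.
rewrite !expr2 generic_c_spec.2.1 generic_s_spec.2.1 generic_csj.
exact: idem_decomp.
Qed.

Lemma generic_compress : p * q * p = c ^+ 2 * p /\ c ^+ 2 * p = p * c ^+ 2.
Proof.
rewrite expr2 generic_c_spec.2.1.
by split; [apply: compress_idem | apply: sqr_sub_perp_comml].
Qed.

Lemma generic_compress_perp :
  perp p * q * perp p = s ^+ 2 * perp p /\ s ^+ 2 * perp p = perp p * s ^+ 2.
Proof.
rewrite expr2 generic_s_spec.2.1.
by split; [apply: compress_perp | apply: sqr_sub_idem_commr].
Qed.

Lemma generic_carrier : carrier S c = 1 /\ carrier S s = 1.
Proof. by split; apply: carrier_eq1. Qed.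

Lemma generic_commute_j : inC S c s /\ inC S c j /\ inC S s j.
Proof.
have Aj : A j := generic_j_symmetry.1.1.
rewrite /inC /commutes generic_j_eq in Aj *.
by do !split => //; [apply: sym_pair_commc | apply: sym_pair_comms].
Qed.

Lemma generic_j_CC : inCC S (p * q * perp p + perp p * q * p) j.
Proof.
have [[Aj jj] _] := generic_j_symmetry.
split => // x [Ax]; rewrite /commutes generic_offdiag => csjx.
apply: commute_sym_of_commute_mul cs0 Aj jj _ Ax csjx.
  by apply: sa_pos_mulC generic_c_spec.1 generic_s_spec.1 _; apply/esym.
have [_ [[_ cj] [_ sj]]] := generic_commute_j.
by rewrite -mulrA sj mulrA cj mulrA.
Qed.

End GenericPosition.

End Synaptic.

Theorem theorem7p8 (R : realType) (E : algType R) (S : SynapticAlgebra E)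
  (p q : E) :
  is_proj S p -> is_proj S q ->
  is_meet S p q 0 -> is_meet S p (perp q) 0 ->
  is_meet S (perp p) q 0 -> is_meet S (perp p) (perp q) 0 ->
  let c := ssqrt S (p * q * p + perp p * perp q * perp p) in
  let s := ssqrt S (p * perp q * p + perp p * q * perp p) in
  let u := polar_sym S (p - perp q) in
  let v := polar_sym S (p - q) in
  let j := u * v * p + p * v * u in
  (q = c ^+ 2 * p + c * s * j + s ^+ 2 * perp p) /\
  (p * q * p = c ^+ 2 * p /\ c ^+ 2 * p = p * c ^+ 2) /\
  (perp p * q * perp p = s ^+ 2 * perp p /\ s ^+ 2 * perp p = perp p * s ^+ 2) /\
  (p * q * perp p + perp p * q * p = c * s * j) /\
  (carrier S c = 1 /\ carrier S s = 1) /\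
  (is_symmetry S j /\ j * p * j = perp p) /\
  (inC S c s /\ inC S c j /\ inC S s j) /\
  inCC S (p * q * perp p + perp p * q * p) j.
Proof.
move=> hp hq meet_pq meet_pq' meet_p'q meet_p'q' c s u v j.
split; first exact: generic_decomp.
split; first exact: generic_compress.
split; first exact: generic_compress_perp.
split; first exact: generic_offdiag.
split; first exact: generic_carrier.
split; first exact: generic_j_symmetry.
split; first exact: generic_commute_j.
exact: generic_j_CC.
Qed.
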